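(* Let $(\mathbf{H},m,\Delta)$ be a self-adjoint poset Hopf monoid. Then its linearization $\mathbf{k}\mathbf{H}$ is commutative and cocommutative.
   Context: $\mathbf{k}$ is a field of characteristic $0$. A (connected) poset species $\mathbf{H}$ assigns to each finite set $I$ a locally finite poset $\mathbf{H}[I]$, $\mathbf{H}[\emptyset]=\{1\}$, and to each bijection an order-preserving bijection, functorially. A poset Hopf monoid $(\mathbf{H},m,\Delta)$ consists of order-preserving maps $m_{S,T}:\mathbf{H}[S]\times\mathbf{H}[T]\to\mathbf{H}[S\sqcup T]$ (natural, associative, unital) and $\Delta_{S,T}:\mathbf{H}[S\sqcup T]\to\mathbf{H}[S]\times\mathbf{H}[T]$ (natural, coassociative, counital), satisfying compatibility: for $I=S_1\sqcup S_2=T_1\sqcup T_2$, $A=S_1\cap T_1$, $B=S_1\cap T_2$, $C=S_2\cap T_1$, $D=S_2\cap T_2$, if $\Delta_{A,B}(x)=(x_A,x_B)$, $\Delta_{C,D}(y)=(y_C,y_D)$ then $\Delta_{T_1,T_2}(m_{S_1,S_2}(x,y))=(m_{A,C}(x_A,y_C),m_{B,D}(x_B,y_D))$. It is self-adjoint if $m_{S,T}$ and $\Delta_{S,T}$ form a Galois connection for all $S,T$ (either $\Delta\dashv m$ or $m\dashv\Delta$). $\mathbf{k}\mathbf{H}$ is the linearization (basis $\mathbf{H}[I]$). A vector space monoid is commutative if $m_{S,T}(x,y)=m_{T,S}(y,x)$; a comonoid is cocommutative if $\Delta_{S,T}=\beta\circ\Delta_{T,S}$ where $\beta$ swaps tensor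 factors. *)

From HB Require Import structures.
From mathcomp Require Import all_boot all_order all_algebra.
From mathcomp Require Import finmap.
From mathcomp Require Import monalg.

Set Implicit Arguments.
Unset Strict Implicit.
Unset Printing Implicit Defensive.

Import Order.Theory GRing.Theory.
Local Open Scope order_scope.
Local Open Scope fset_scope.

(** Finite sets are modelled as finite sets of natural numbers [{fset nat}].
    The maps [m I S T : H S -> H T -> H I], [Delta I S T : H I -> H S * H T]
    are only required to have the axioms when [I = S ⊔ T] ([decomp I S T]);
    their values on other triples are irrelevant junk.
    [rel I J s : H I -> H J] is the action of the bijection [I -> J] given by
    restricting [s : nat -> nat] to [I] (whenever [valid_bij s I J]). *)

Definition decomp (I S T : {fset nat}) : bool :=
  (S `&` T == fset0) && (S `|` T == I).

Definition valid_bij (s : nat -> nat) (I J : {fset nat}) : Prop :=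
  {in I &, injective s} /\ [fset s x | x in I] = J.

Definition fimg (s : nat -> nat) (I : {fset nat}) : {fset nat} :=
  [fset s x | x in I].

Section PosetHopf.
Context {d : Order.disp_t} (H : {fset nat} -> porderType d).

Definition locally_finite (P : porderType d) : Prop :=
  forall x y : P, exists s : seq P, forall z : P, x <= z -> z <= y -> z \in s.

Definition le_pair (S T : {fset nat}) (p q : H S * H T) : bool :=
  (p.1 <= q.1) && (p.2 <= q.2).

Record poset_species (rel : forall I J : {fset nat}, (nat -> nat) -> H I -> H J)
  : Prop := {
  ps_locfin : forall I, locally_finite (H I);
  ps_empty : exists u : H fset0, forall v : H fset0, v = u;
  ps_id : forall I (x : H I), rel I I id x = x;
  ps_comp : forall I J K s t (x : H I), valid_bij s I J -> valid_bij t J K ->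
          rel J K t (rel I J s x) = rel I K (t \o s) x;
  ps_ext : forall I J s t, valid_bij s I J -> {in I, s =1 t} -> rel I J s =1 rel I J t;
  ps_mono : forall I J s, valid_bij s I J -> {homo rel I J s : x y / x <= y} }.

Record poset_Hopf_monoid
  (rel : forall I J : {fset nat}, (nat -> nat) -> H I -> H J)
  (m : forall I S T : {fset nat}, H S -> H T -> H I)
  (D : forall I S T : {fset nat}, H I -> H S * H T) : Prop := {
  ph_species : poset_species rel;
  ph_m_mono : forall I S T (x x' : H S) (y y' : H T), decomp I S T ->
      x <= x' -> y <= y' -> m I S T x y <= m I S T x' y';
  ph_D_mono : forall I S T (z z' : H I), decomp I S T -> z <= z' ->
      le_pair (D I S T z) (D I S T z');
  ph_m_nat : forall I J S T s (x : H S) (y : H T), decomp I S T -> valid_bij s I J ->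
      rel I J s (m I S T x y)
      = m J (fimg s S) (fimg s T) (rel S (fimg s S) s x) (rel T (fimg s T) s y);
  ph_D_nat : forall I J S T s (z : H I), decomp I S T -> valid_bij s I J ->
      D J (fimg s S) (fimg s T) (rel I J s z)
      = (rel S (fimg s S) s (D I S T z).1, rel T (fimg s T) s (D I S T z).2);
  ph_assoc : forall I S T U (x : H S) (y : H T) (z : H U),
      decomp (S `|` T) S T -> decomp I (S `|` T) U -> decomp (T `|` U) T U ->
      decomp I S (T `|` U) ->
      m I (S `|` T) U (m (S `|` T) S T x y) z
      = m I S (T `|` U) x (m (T `|` U) T U y z);
  ph_unit : forall I (x : H I) (u : H fset0), m I I fset0 x u = x /\ m I fset0 I u x = x;
  ph_coassoc : forall I S T U (z : H I),
      decomp (S `|` T) S T -> decomp I (S `|` T) U -> decomp (T `|` U) T U ->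
      decomp I S (T `|` U) ->
      let a := D I (S `|` T) U z in
      let a1 := D (S `|` T) S T a.1 in
      let b := D I S (T `|` U) z in
      let b2 := D (T `|` U) T U b.2 in
      [/\ a1.1 = b.1, a1.2 = b2.1 & a.2 = b2.2];
  ph_counit : forall I (z : H I), (D I I fset0 z).1 = z /\ (D I fset0 I z).2 = z;
  ph_compat : forall I S1 S2 T1 T2 (x : H S1) (y : H S2),
      decomp I S1 S2 -> decomp I T1 T2 ->
      let A := S1 `&` T1 in let B := S1 `&` T2 in
      let C := S2 `&` T1 in let E := S2 `&` T2 in
      D I T1 T2 (m I S1 S2 x y)
      = (m T1 A C (D S1 A B x).1 (D S2 C E y).1,
         m T2 B E (D S1 A B x).2 (D S2 C E y).2) }.

Definition galois_conn {P Q : Type} (leP : rel P) (leQ : rel Q)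
  (f : P -> Q) (g : Q -> P) : Prop :=
  forall p q, leQ (f p) q = leP p (g q).

Definition self_adjoint
  (m : forall I S T : {fset nat}, H S -> H T -> H I)
  (D : forall I S T : {fset nat}, H I -> H S * H T) : Prop :=
  (forall I S T, decomp I S T ->
     galois_conn (@Order.le _ (H I)) (@le_pair S T)
       (D I S T) (fun p => m I S T p.1 p.2))
  \/
  (forall I S T, decomp I S T ->
     galois_conn (@le_pair S T) (@Order.le _ (H I))
       (fun p => m I S T p.1 p.2) (D I S T)).

(** Linearization kH: kH[I] is the free k-vector space {malg k[H I]} on H[I];
    kH[S] (x) kH[T] is identified with the free space on H S * H T. *)
Variable k : fieldType.

Definition lin_mul (m : forall I S T : {fset nat}, H S -> H T -> H I)
  (I S T : {fset nat}) (f : {malg k[H S]}) (g : {malg k[H T]}) : {malg k[H I]} :=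
  (\sum_(a <- msupp f) \sum_(b <- msupp g) << f@_a * g@_b *g m I S T a b >>)%R.

Definition lin_comul (D : forall I S T : {fset nat}, H I -> H S * H T)
  (I S T : {fset nat}) (f : {malg k[H I]}) : {malg k[(H S * H T)%type]} :=
  (\sum_(a <- msupp f) << f@_a *g D I S T a >>)%R.

Definition lin_swap (S T : {fset nat}) (g : {malg k[(H T * H S)%type]})
  : {malg k[(H S * H T)%type]} :=
  (\sum_(p <- msupp g) << g@_p *g (p.2, p.1) >>)%R.

Definition lin_commutative (m : forall I S T : {fset nat}, H S -> H T -> H I) : Prop :=
  forall I S T (f : {malg k[H S]}) (g : {malg k[H T]}), decomp I S T ->
    lin_mul m I f g = lin_mul m I g f.

Definition lin_cocommutative (D : forall I S T : {fset nat}, H I -> H S * H T) : Prop :=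
  forall I S T (f : {malg k[H I]}), decomp I S T ->
    lin_comul D S T f = lin_swap (lin_comul D T S f).

End PosetHopf.

(** Compatibility of [m] and [Delta], together with (co)unitality, gives
    [Delta_{T,S} (m_{S,T} (x, y)) = (y, x)].  Under self-adjointness this says that
    [m_{S,T}] and [m_{T,S} \o swap], adjoints of [Delta_{S,T}] and
    [swap \o Delta_{T,S}] respectively, each compose with the other's partner to the
    identity, which forces [m_{S,T} = m_{T,S} \o swap].  Then [Delta_{S,T}] and
    [swap \o Delta_{T,S}] are adjoint to the same map, so they agree by uniqueness
    of adjoints.  Both identities hold on the posets themselves, hence on the
    linearizations over any field. *)
From Pilot Require Import Defs.
From mathcomp Require Import all_boot all_order all_algebra.
From mathcomp Require Import finmap.
From mathcomp Require Import monalg.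
Import Order.POrderTheory GRing.Theory.

Unset Printing Implicit Defensive.

Section GaloisConnection.
Context {P Q : Type} {leP : rel P} {leQ : rel Q}.
Hypotheses (leP_refl : reflexive leP) (leP_anti : antisymmetric leP).
Hypotheses (leQ_refl : reflexive leQ) (leQ_anti : antisymmetric leQ).

Lemma galois_conn_left_eq {f f' : P -> Q} {g g' : Q -> P} :
  galois_conn leP leQ f g -> galois_conn leP leQ f' g' ->
  (forall p, leP p (g (f' p))) -> (forall p, leP p (g' (f p))) -> f =1 f'.
Proof. by move=> fg fg' le_g le_g' p; apply: leQ_anti; rewrite fg fg' le_g le_g'. Qed.

Lemma galois_conn_right_eq {f f' : P -> Q} {g g' : Q -> P} :
  galois_conn leP leQ f g -> galois_conn leP leQ f' g' ->
  (forall q, leQ (f (g' q)) q) -> (forall q, leQ (f' (g q)) q) -> g =1 g'.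
Proof. by move=> fg fg' le_f le_f' q; apply: leP_anti; rewrite -fg -fg' le_f le_f'. Qed.

Lemma galois_conn_left_unique {f f' : P -> Q} {g g' : Q -> P} :
  galois_conn leP leQ f g -> galois_conn leP leQ f' g' -> g =1 g' -> f =1 f'.
Proof.
move=> fg fg' eq_g; apply: (galois_conn_left_eq fg fg') => p.
  by rewrite eq_g -fg' leQ_refl.
by rewrite -eq_g -fg leQ_refl.
Qed.

Lemma galois_conn_right_unique {f f' : P -> Q} {g g' : Q -> P} :
  galois_conn leP leQ f g -> galois_conn leP leQ f' g' -> f =1 f' -> g =1 g'.
Proof.
move=> fg fg' eq_f; apply: (galois_conn_right_eq fg fg') => q.
  by rewrite eq_f fg' leP_refl.
by rewrite -eq_f fg leP_refl.
Qed.

End GaloisConnection.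

Section PairOrder.
Context {d : Order.disp_t} {H : {fset nat} -> porderType d}.
Implicit Types S T : {fset nat}.

Lemma le_pair_refl S T : reflexive (@Defs.le_pair d H S T).
Proof. by move=> p; rewrite /Defs.le_pair !lexx. Qed.

Lemma le_pair_anti S T : antisymmetric (@Defs.le_pair d H S T).
Proof.
move=> [x1 y1] [x2 y2] /andP[/andP[le_x le_y] /andP[ge_x ge_y]].
by congr pair; apply/le_anti/andP.
Qed.

Lemma le_pair_swap S T (p q : H T * H S) :
  Defs.le_pair (swap_pair p) (swap_pair q) = Defs.le_pair p q.
Proof. by rewrite /Defs.le_pair andbC. Qed.

Lemma galois_conn_swapr {P : Type} {leP : rel P} {S T} {f : P -> H T * H S} {g} :
  galois_conn leP (@Defs.le_pair d H T S) f g ->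
  galois_conn leP (@Defs.le_pair d H S T) (swap_pair \o f) (g \o swap_pair).
Proof. by move=> fg p q; rewrite -[q in LHS]swap_pairK le_pair_swap fg. Qed.

Lemma galois_conn_swapl {Q : Type} {leQ : rel Q} {S T} {f : H T * H S -> Q} {g} :
  galois_conn (@Defs.le_pair d H T S) leQ f g ->
  galois_conn (@Defs.le_pair d H S T) leQ (f \o swap_pair) (swap_pair \o g).
Proof. by move=> fg p q; rewrite /= fg -le_pair_swap swap_pairK. Qed.

End PairOrder.

Lemma decompC {I S T : {fset nat}} : decomp I S T -> decomp I T S.
Proof. by rewrite /decomp fsetIC fsetUC. Qed.

Section PosetHopfMonoid.
Context {d : Order.disp_t} {H : {fset nat} -> porderType d}
  {rel : forall I J : {fset nat}, (nat -> nat) -> H I -> H J}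
  {m : forall I S T : {fset nat}, H S -> H T -> H I}
  {D : forall I S T : {fset nat}, H I -> H S * H T}.
Hypothesis hopf : poset_Hopf_monoid rel m D.

Lemma comul_mul_swap I S T (x : H S) (y : H T) :
  decomp I S T -> D I T S (m I S T x y) = (y, x).
Proof.
move=> dec; have /andP[/eqP disj _] := dec.
rewrite (ph_compat hopf x y dec (decompC dec)) /= fsetIid (fsetIC T S) disj fsetIid.
have [_ ->] := ph_counit hopf x; have [-> _] := ph_counit hopf y.
by rewrite (ph_unit hopf x _).1 (ph_unit hopf y _).2.
Qed.

Hypothesis self_adj : self_adjoint m D.

Lemma mul_comm I S T (x : H S) (y : H T) :
  decomp I S T -> m I S T x y = m I T S y x.
Proof.
move=> dec; have decC := decompC dec.
case: self_adj => adj.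
- have adjTS := galois_conn_swapr (adj I T S decC).
  apply: (galois_conn_right_eq le_anti (adj I S T dec) adjTS _ _ (x, y)) => -[a b];
    by rewrite /= comul_mul_swap // le_pair_refl.
- have adjTS := galois_conn_swapl (adj I T S decC).
  apply: (galois_conn_left_eq le_anti (adj I S T dec) adjTS _ _ (x, y)) => -[a b];
    by rewrite /= comul_mul_swap // le_pair_refl.
Qed.

Lemma comul_cocomm I S T (z : H I) :
  decomp I S T -> D I S T z = swap_pair (D I T S z).
Proof.
move=> dec; have decC := decompC dec.
have mulC (p : H S * H T) : m I S T p.1 p.2 = m I T S p.2 p.1 by exact: mul_comm.
case: self_adj => adj.
- exact: (galois_conn_left_unique (@le_pair_refl _ H S T) (@le_pair_anti _ H S T)
            (adj I S T dec) (galois_conn_swapr (adj I T S decC)) mulC).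
- exact: (galois_conn_right_unique (@le_pair_refl _ H S T) (@le_pair_anti _ H S T)
            (adj I S T dec) (galois_conn_swapl (adj I T S decC)) mulC).
Qed.

End PosetHopfMonoid.

Lemma swap_pair_eq {A B : eqType} (p : A * B) (q : B * A) :
  (swap_pair p == q) = (p == swap_pair q).
Proof. by rewrite -{1}(swap_pairK q) (can_eq swap_pairK). Qed.

Section Linearization.
Context {d : Order.disp_t} {H : {fset nat} -> porderType d} {k : fieldType}.

Lemma lin_mul_comm (m : forall I S T : {fset nat}, H S -> H T -> H I) I S T
    (f : {malg k[H S]}) (g : {malg k[H T]}) :
  (forall x y, m I S T x y = m I T S y x) -> lin_mul m I f g = lin_mul m I g f.
Proof.
move=> mC; rewrite /lin_mul exchange_big /=.
by apply: eq_bigr => b _; apply: eq_bigr => a _; rewrite mC mulrC.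
Qed.

Lemma mcoeff_lin_swap S T (g : {malg k[(H T * H S)%type]}) q :
  (lin_swap g)@_q = g@_(swap_pair q).
Proof.
rewrite [in RHS](monalgE g) /lin_swap !raddf_sum /=.
by apply: eq_bigr => p _; rewrite !mcoeffU swap_pair_eq.
Qed.

Lemma lin_comul_cocomm (D : forall I S T : {fset nat}, H I -> H S * H T) I S T
    (f : {malg k[H I]}) :
  (forall z, D I S T z = swap_pair (D I T S z)) ->
  lin_comul D S T f = lin_swap (lin_comul D T S f).
Proof.
move=> DC; apply/malgP => q; rewrite mcoeff_lin_swap /lin_comul !raddf_sum /=.
by apply: eq_bigr => a _; rewrite !mcoeffU DC swap_pair_eq.
Qed.

End Linearization.

Theorem mainTheorem10 (k : fieldType) (k_char0 : [pchar k]%R =i pred0)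
  (d : Order.disp_t) (H : {fset nat} -> porderType d)
  (rel : forall I J : {fset nat}, (nat -> nat) -> H I -> H J)
  (m : forall I S T : {fset nat}, H S -> H T -> H I)
  (D : forall I S T : {fset nat}, H I -> H S * H T) :
  poset_Hopf_monoid rel m D -> self_adjoint m D ->
  lin_commutative k m /\ lin_cocommutative k D.
Proof.
move=> hopf self_adj; split=> [I S T f g | I S T f] dec.
- by apply: lin_mul_comm => x y; apply: (mul_comm hopf self_adj).
- by apply: lin_comul_cocomm => z; apply: (comul_cocomm hopf self_adj).
Qed.
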